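(* Let $B=\bigoplus_{i\in\mathbb{Z}}\mathbb{Z}_2$, let $m\ge1$, let $S_m$ be the set of $0/1$ sequences of length $m$, and let $\pi$ be any permutation of $S_m$. Define $\psi:B\to B$ by applying $\pi$ to the subsequence $(x_0,\dots,x_{m-1})$ of $x=(x_i)$ and leaving all other coordinates unchanged. Then $\psi$ is a bijection which is biLipschitz with respect to both $d_\ell$ and $d_u$, with biLipschitz constants at most $2^m$; i.e. $2^{-m}d(p,q)\le d(\psi(p),\psi(q))\le 2^m d(p,q)$ for all $p,q\in B$ and $d\in\{d_\ell,d_u\}$.
   Context: For distinct $p=(x_i),q=(y_i)\in B$: $d_\ell(p,q)=2^{-l_+}$ where $l_+$ is the smallest integer with $x_{l_+}\neq y_{l_+}$, and $d_u(p,q)=2^{l_-}$ where $l_-$ is the largest integer with $x_{l_-}\neq y_{l_-}$; $d_\ell(p,p)=d_u(p,p)=0$. (These are the metrics on the lower and upper boundaries of the Diestel–Leader graph $DL(2,2)$ restricted to $B$.) *)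

From mathcomp Require Import all_boot all_fingroup.
From Stdlib Require Import ZArith Reals ClassicalEpsilon Lia.

Set Implicit Arguments. Unset Strict Implicit. Unset Printing Implicit Defensive.

Definition finsupp (x : Z -> bool) : Prop :=
  exists N : Z, forall i : Z, (N < Z.abs i)%Z -> x i = false.

Definition B := {x : Z -> bool | finsupp x}.

Definition least_diff (x y : Z -> bool) (l : Z) : Prop :=
  x l <> y l /\ forall j : Z, (j < l)%Z -> x j = y j.

Definition greatest_diff (x y : Z -> bool) (l : Z) : Prop :=
  x l <> y l /\ forall j : Z, (l < j)%Z -> x j = y j.

Definition d_ell (x y : Z -> bool) : R :=
  if excluded_middle_informative (exists i, x i <> y i)
  then powerRZ 2 (- epsilon (inhabits 0%Z) (least_diff x y))
  else 0%R.

Definition d_u (x y : Z -> bool) : R :=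
  if excluded_middle_informative (exists i, x i <> y i)
  then powerRZ 2 (epsilon (inhabits 0%Z) (greatest_diff x y))
  else 0%R.

Definition window (m : nat) (x : Z -> bool) : {ffun 'I_m -> bool} :=
  [ffun j : 'I_m => x (Z.of_nat (nat_of_ord j))].

Definition psi_raw (m : nat) (pi : {perm {ffun 'I_m -> bool}}) (x : Z -> bool)
  : Z -> bool :=
  fun i => if (0 <=? i)%Z then
             match Z.to_nat i < m as b return (Z.to_nat i < m) = b -> bool with
             | true => fun h => pi (window m x) (Ordinal h)
             | false => fun _ => x i
             end erefl
           else x i.

Lemma psi_raw_finsupp m (pi : {perm {ffun 'I_m -> bool}}) x :
  finsupp x -> finsupp (psi_raw pi x).
Proof.
move=> [N HN]; exists (Z.max N (Z.of_nat m)) => i Hi.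
rewrite /psi_raw.
case: (Z.leb_spec0 0 i) => H0; last by apply: HN; lia.
have Hn : (Z.to_nat i < m) = false.
  apply/negbTE; rewrite -leqNgt; apply/leP; lia.
generalize (@erefl bool (Z.to_nat i < m)).
rewrite {2 3}Hn => _.
apply: HN; lia.
Qed.

Definition psi (m : nat) (pi : {perm {ffun 'I_m -> bool}}) (p : B) : B :=
  exist _ (psi_raw pi (proj1_sig p)) (psi_raw_finsupp pi (proj2_sig p)).

(* The map psi changes only the coordinates 0, ..., m-1, and two points differ somewhere
   in that window iff their images do, because pi is injective.  Hence the sets of indices
   where p, q differ and where psi p, psi q differ coincide outside the window and both do
   or both do not meet it, so their least (and greatest) elements are at most m apart;
   this is a factor of at most 2^m on d_ell and on d_u.  The inverse of psi is the map
   built from pi^-1. *)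
From mathcomp Require Import all_boot all_fingroup.
From Stdlib Require Import ZArith Reals Lia Lra ClassicalEpsilon Classical
  ProofIrrelevance FunctionalExtensionality.

Set Implicit Arguments. Unset Strict Implicit. Unset Printing Implicit Defensive.

Definition diff_at (x y : Z -> bool) (i : Z) : Prop := x i <> y i.

Lemma finsupp_opp (x : Z -> bool) : finsupp x -> finsupp (fun i => x (- i)%Z).
Proof. by case=> N hN; exists N => i hi; apply: hN; lia. Qed.

Lemma least_diff_le x y l j : least_diff x y l -> diff_at x y j -> (l <= j)%Z.
Proof.
case=> _ below hj; case: (Z.le_gt_cases l j) => // hlt.
by case: hj; apply: below.
Qed.

Lemma least_diff_unique x y l l' : least_diff x y l -> least_diff x y l' -> l = l'.
Proof.
move=> hl hl'.
exact: Z.le_antisymm (least_diff_le hl (proj1 hl')) (least_diff_le hl' (proj1 hl)).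
Qed.

Lemma least_diff_exists x y : finsupp x -> finsupp y ->
  (exists i, diff_at x y i) -> exists l, least_diff x y l.
Proof.
move=> [N1 h1] [N2 h2] [i hi].
pose N := Z.max N1 N2.
have bounded j : diff_at x y j -> (- N <= j)%Z.
  move=> hj; case: (Z.le_gt_cases (- N) j) => // hlt.
  by case: hj; rewrite h1 ?h2; lia.
(* Shift by the support bound so that the least-element principle on nat applies. *)
pose P n := x (Z.of_nat n - N)%Z != y (Z.of_nat n - N)%Z.
have exP : exists n, P n.
  have hNi := bounded i hi.
  by exists (Z.to_nat (i + N)); apply/eqP; rewrite Z2Nat.id ?Z.add_simpl_r //; lia.
case: (ex_minnP exP) => n /eqP hn minimal.
exists (Z.of_nat n - N)%Z; split=> // j hj.
apply: NNPP => hne; have hNj := bounded j hne.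
have : (n <= Z.to_nat (j + N))%coq_nat.
  by apply/leP/minimal/eqP; rewrite Z2Nat.id ?Z.add_simpl_r //; lia.
lia.
Qed.

Lemma greatest_diff_opp x y g :
  greatest_diff x y g <-> least_diff (fun i => x (- i)%Z) (fun i => y (- i)%Z) (- g).
Proof.
rewrite /greatest_diff /least_diff Z.opp_involutive.
split=> -[hg above]; split=> // j hj.
- by apply: above; lia.
- by rewrite -(Z.opp_involutive j); apply: above; lia.
Qed.

Lemma greatest_diff_ge x y g j : greatest_diff x y g -> diff_at x y j -> (j <= g)%Z.
Proof.
move=> /greatest_diff_opp hg hj.
suff : (- g <= - j)%Z by lia.
by apply: (least_diff_le hg); rewrite /diff_at Z.opp_involutive.
Qed.

Lemma greatest_diff_unique x y g g' :
  greatest_diff x y g -> greatest_diff x y g' -> g = g'.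
Proof.
move=> /greatest_diff_opp hg /greatest_diff_opp hg'.
exact: Z.opp_inj (least_diff_unique hg hg').
Qed.

Lemma greatest_diff_exists x y : finsupp x -> finsupp y ->
  (exists i, diff_at x y i) -> exists g, greatest_diff x y g.
Proof.
move=> fx fy [i hi].
have hi' : diff_at (fun j => x (- j)%Z) (fun j => y (- j)%Z) (- i).
  by rewrite /diff_at Z.opp_involutive.
have [l hl] := least_diff_exists (finsupp_opp fx) (finsupp_opp fy) (ex_intro _ _ hi').
by exists (- l)%Z; apply/greatest_diff_opp; rewrite Z.opp_involutive.
Qed.

Lemma d_ell_least x y l : least_diff x y l -> d_ell x y = powerRZ 2 (- l).
Proof.
move=> hl; rewrite /d_ell; destruct (excluded_middle_informative _) as [ex|none] => /=.
- by rewrite (least_diff_unique (epsilon_spec _ _ (ex_intro _ l hl)) hl).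
- by case: none; exists l; case: hl.
Qed.

Lemma d_u_greatest x y g : greatest_diff x y g -> d_u x y = powerRZ 2 g.
Proof.
move=> hg; rewrite /d_u; destruct (excluded_middle_informative _) as [ex|none] => /=.
- by rewrite (greatest_diff_unique (epsilon_spec _ _ (ex_intro _ g hg)) hg).
- by case: none; exists g; case: hg.
Qed.

Lemma d_ell_eq0 x y : ~ (exists i, diff_at x y i) -> d_ell x y = 0%R.
Proof. by rewrite /d_ell; destruct (excluded_middle_informative _). Qed.

Lemma d_u_eq0 x y : ~ (exists i, diff_at x y i) -> d_u x y = 0%R.
Proof. by rewrite /d_u; destruct (excluded_middle_informative _). Qed.

Lemma d_ell_ge0 x y : (0 <= d_ell x y)%R.
Proof.
rewrite /d_ell; destruct (excluded_middle_informative _); last exact: Rle_refl.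
by apply: powerRZ_le; lra.
Qed.

Lemma d_u_ge0 x y : (0 <= d_u x y)%R.
Proof.
rewrite /d_u; destruct (excluded_middle_informative _); last exact: Rle_refl.
by apply: powerRZ_le; lra.
Qed.

Lemma powerRZ2_le_pow_mul (k k' : Z) (m : nat) :
  (k' <= Z.of_nat m + k)%Z -> (powerRZ 2 k' <= 2 ^ m * powerRZ 2 k)%R.
Proof.
move=> hk.
have -> : (2 ^ m * powerRZ 2 k = powerRZ 2 k' * 2 ^ Z.to_nat (Z.of_nat m + k - k'))%R.
  rewrite !pow_powerRZ -!powerRZ_add; try lra.
  by congr powerRZ; lia.
have := powerRZ_lt 2 k' ltac:(lra).
have : (1 <= 2 ^ Z.to_nat (Z.of_nat m + k - k'))%R by apply: pow_R1_Rle; lra.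
nra.
Qed.

Definition window_equiv (a : Z) (m : nat) (P Q : Z -> Prop) : Prop :=
  (forall i, (i < a \/ a + Z.of_nat m <= i)%Z -> (P i <-> Q i)) /\
  ((exists i, (a <= i < a + Z.of_nat m)%Z /\ P i) <->
   (exists i, (a <= i < a + Z.of_nat m)%Z /\ Q i)).

Section WindowEquiv.

Variables (a : Z) (m : nat) (P Q : Z -> Prop).
Hypothesis PQ : window_equiv a m P Q.

Lemma window_equiv_sym : window_equiv a m Q P.
Proof. by case: PQ => out win; split=> [i /out|]; apply: iff_sym. Qed.

(* The reflection i |-> -i maps the window [a, a + m) onto [1 - a - m, 1 - a). *)
Lemma window_equiv_opp :
  window_equiv (1 - a - Z.of_nat m) m (fun i => P (- i)%Z) (fun i => Q (- i)%Z).
Proof.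
case: PQ => out [win_PQ win_QP]; split=> [i hi|]; first by apply: out; lia.
split=> -[i [hi hPQ]]; have hi' : (a <= - i < a + Z.of_nat m)%Z by lia.
- have [j [hj hQ]] := win_PQ (ex_intro _ _ (conj hi' hPQ)).
  by exists (- j)%Z; rewrite Z.opp_involutive; split=> //; lia.
- have [j [hj hP]] := win_QP (ex_intro _ _ (conj hi' hPQ)).
  by exists (- j)%Z; rewrite Z.opp_involutive; split=> //; lia.
Qed.

Lemma window_equiv_ex : (exists i, Q i) -> exists i, P i.
Proof.
case: PQ => out [_ win] [i hi].
case: (classic (a <= i < a + Z.of_nat m)%Z) => hin.
  by have [j [_ ?]] := win (ex_intro _ i (conj hin hi)); exists j.
by exists i; apply/(out i); first lia.
Qed.

Lemma window_equiv_lower_bound l l' :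
  (forall j, P j -> l <= j)%Z -> Q l' -> (l <= l' + Z.of_nat m)%Z.
Proof.
case: PQ => out [_ win] lb hl'.
case: (classic (a <= l' < a + Z.of_nat m)%Z) => hin.
  by have [j [hj /lb]] := win (ex_intro _ l' (conj hin hl')); lia.
have /lb : P l' by apply/(out l'); first lia.
lia.
Qed.

End WindowEquiv.

Lemma window_equiv_upper_bound a m P Q g g' :
  window_equiv a m P Q -> (forall j, P j -> j <= g)%Z -> Q g' -> (g' <= g + Z.of_nat m)%Z.
Proof.
move=> /window_equiv_opp PQ ub hg'.
have : (- g <= - g' + Z.of_nat m)%Z.
  apply: (window_equiv_lower_bound PQ) => [j /ub|]; last by rewrite Z.opp_involutive.
  lia.
lia.
Qed.

Section WindowLipschitz.

Variables (a : Z) (m : nat) (x y x' y' : Z -> bool).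
Hypotheses (fx : finsupp x) (fy : finsupp y) (fx' : finsupp x') (fy' : finsupp y').
Hypothesis equiv_xy : window_equiv a m (diff_at x y) (diff_at x' y').

Lemma d_ell_window_le : (d_ell x' y' <= 2 ^ m * d_ell x y)%R.
Proof.
case: (classic (exists i, diff_at x' y' i)) => [ex'|none']; last first.
  rewrite d_ell_eq0 //; apply: Rmult_le_pos; [apply: pow_le; lra | exact: d_ell_ge0].
have [l hl] := least_diff_exists fx fy (window_equiv_ex equiv_xy ex').
have [l' hl'] := least_diff_exists fx' fy' ex'.
rewrite (d_ell_least hl) (d_ell_least hl'); apply: powerRZ2_le_pow_mul.
have := window_equiv_lower_bound equiv_xy (fun j => least_diff_le hl) (proj1 hl').
lia.
Qed.

Lemma d_u_window_le : (d_u x' y' <= 2 ^ m * d_u x y)%R.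
Proof.
case: (classic (exists i, diff_at x' y' i)) => [ex'|none']; last first.
  rewrite d_u_eq0 //; apply: Rmult_le_pos; [apply: pow_le; lra | exact: d_u_ge0].
have [g hg] := greatest_diff_exists fx fy (window_equiv_ex equiv_xy ex').
have [g' hg'] := greatest_diff_exists fx' fy' ex'.
rewrite (d_u_greatest hg) (d_u_greatest hg'); apply: powerRZ2_le_pow_mul.
have := window_equiv_upper_bound equiv_xy (fun j => greatest_diff_ge hg) (proj1 hg').
lia.
Qed.

End WindowLipschitz.

Lemma psi_raw_out m (pi : {perm {ffun 'I_m -> bool}}) x i :
  (i < 0 \/ Z.of_nat m <= i)%Z -> psi_raw pi x i = x i.
Proof.
move=> hi; rewrite /psi_raw; case: Z.leb_spec0 => // h0.
have Hn : (Z.to_nat i < m) = false by apply/negbTE; rewrite -leqNgt; apply/leP; lia.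
by move: (erefl (Z.to_nat i < m)); rewrite {2 3}Hn.
Qed.

Lemma psi_raw_in m (pi : {perm {ffun 'I_m -> bool}}) x i (hi : Z.to_nat i < m) :
  (0 <= i)%Z -> psi_raw pi x i = pi (window m x) (Ordinal hi).
Proof.
move=> h0; rewrite /psi_raw; case: Z.leb_spec0 => // _.
move: (erefl (Z.to_nat i < m)); rewrite {2 3}hi => hi'.
by congr (pi _ _); apply: val_inj.
Qed.

Lemma window_psi_raw m (pi : {perm {ffun 'I_m -> bool}}) x :
  window m (psi_raw pi x) = pi (window m x).
Proof.
apply/ffunP => j; rewrite ffunE.
have hj : Z.to_nat (Z.of_nat j) < m by rewrite Nat2Z.id.
rewrite (psi_raw_in pi x hj); last lia.
by congr (pi _ _); apply: val_inj; rewrite /= Nat2Z.id.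
Qed.

Lemma psi_rawK m (pi : {perm {ffun 'I_m -> bool}}) x :
  psi_raw pi^-1 (psi_raw pi x) = x.
Proof.
apply: functional_extensionality => i.
case: (classic (0 <= i < Z.of_nat m)%Z) => hin; last by rewrite !psi_raw_out //; lia.
have hi : Z.to_nat i < m by apply/ltP; lia.
by rewrite (psi_raw_in _ _ hi) ?window_psi_raw ?permK ?ffunE /= ?Z2Nat.id //; lia.
Qed.

Lemma psiK m (pi : {perm {ffun 'I_m -> bool}}) : cancel (psi pi) (psi pi^-1).
Proof. by move=> [x fx]; apply: subset_eq_compat; apply: psi_rawK. Qed.

Lemma psi_bijective m (pi : {perm {ffun 'I_m -> bool}}) : bijective (psi pi).
Proof.
exists (psi pi^-1); first exact: psiK.
by move=> p; rewrite -{1}(invgK pi); apply: psiK.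
Qed.

Lemma window_neq m x y :
  (exists i, (0 <= i < Z.of_nat m)%Z /\ diff_at x y i) <-> window m x <> window m y.
Proof.
split=> [[i [hi hxy]] eq_win | neq_win].
  have hi' : Z.to_nat i < m by apply/ltP; lia.
  case: hxy; have := congr1 (fun w : {ffun 'I_m -> bool} => w (Ordinal hi')) eq_win.
  by rewrite !ffunE /= Z2Nat.id //; lia.
apply: NNPP => none; apply: neq_win; apply/ffunP => j; rewrite !ffunE.
apply: NNPP => hj; apply: none; exists (Z.of_nat j); split=> //.
by have /ltP := ltn_ord j; lia.
Qed.

Lemma psi_raw_window_equiv m (pi : {perm {ffun 'I_m -> bool}}) x y :
  window_equiv 0 m (diff_at x y) (diff_at (psi_raw pi x) (psi_raw pi y)).
Proof.
split=> [i hi|]; first by rewrite /diff_at !psi_raw_out.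
rewrite !window_neq !window_psi_raw; split=> neq eq; apply: neq; last by rewrite eq.
exact: perm_inj eq.
Qed.

Lemma Rinv_mul_le_of_le_mul (a b c : R) :
  (0 < c)%R -> (b <= c * a)%R -> (/ c * b <= a)%R.
Proof.
move=> c0 hb; apply: (Rmult_le_reg_l c) => //.
by rewrite -Rmult_assoc Rinv_r; lra.
Qed.

Theorem mainTheorem6 (m : nat) (hm : (1 <= m)%coq_nat)
  (pi : {perm {ffun 'I_m -> bool}}) :
  bijective (psi pi) /\
  (forall p q : B,
     (/ 2 ^ m * d_ell (proj1_sig p) (proj1_sig q)
        <= d_ell (proj1_sig (psi pi p)) (proj1_sig (psi pi q)))%R /\
     (d_ell (proj1_sig (psi pi p)) (proj1_sig (psi pi q))
        <= 2 ^ m * d_ell (proj1_sig p) (proj1_sig q))%R) /\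
  (forall p q : B,
     (/ 2 ^ m * d_u (proj1_sig p) (proj1_sig q)
        <= d_u (proj1_sig (psi pi p)) (proj1_sig (psi pi q)))%R /\
     (d_u (proj1_sig (psi pi p)) (proj1_sig (psi pi q))
        <= 2 ^ m * d_u (proj1_sig p) (proj1_sig q))%R).
Proof.
have pow_pos : (0 < 2 ^ m)%R by apply: pow_lt; lra.
split; first exact: psi_bijective.
split=> -[x fx] [y fy] /=;
  have fpx := psi_raw_finsupp pi fx; have fpy := psi_raw_finsupp pi fy;
  have W := psi_raw_window_equiv pi x y; have W' := window_equiv_sym W.
- split; last exact: d_ell_window_le fx fy fpx fpy W.
  exact: Rinv_mul_le_of_le_mul pow_pos (d_ell_window_le fpx fpy fx fy W').
- split; last exact: d_u_window_le fx fy fpx fpy W.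
  exact: Rinv_mul_le_of_le_mul pow_pos (d_u_window_le fpx fpy fx fy W').
Qed.
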